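(* For any solution as in the context, $$e^{\mu(t,\theta)-\lambda(t,\theta)}\le e^{\mathring\mu(\theta)-\mathring\lambda(\theta)}\frac{e^{-2\mathring\mu(\theta)}t}{e^{-2\mathring\mu(\theta)}-1+t}\le e^{|\mathring\mu(\theta)|-\mathring\lambda(\theta)},\qquad t\ge1,\ \theta\in[0,1].$$
   Context: Setting: $\mu,\lambda$ are functions of $(t,\theta)$, $t\ge1$, 1-periodic in $\theta$, and $f=f(t,\theta,w,L)\ge0$ ($w\in\mathbb R$, $L\ge0$) solve the Einstein–Vlasov system with hyperbolic symmetry in areal coordinates (metric $-e^{2\mu}dt^2+e^{2\lambda}d\theta^2+t^2(d\psi^2+\sinh^2\psi\,d\phi^2)$): $$\partial_t f+\frac{e^{\mu-\lambda}w}{\sqrt{1+w^2+L/t^2}}\partial_\theta f-\Big(\lambda_t w+e^{\mu-\lambda}\mu_\theta\sqrt{1+w^2+L/t^2}\Big)\partial_w f=0,$$ $$e^{-2\mu}(2t\lambda_t+1)-1=8\pi t^2\rho,\qquad e^{-2\mu}(2t\mu_t-1)+1=8\pi t^2 p,\qquad \mu_\theta=-4\pi t e^{\mu+\lambda}j,$$ $$e^{-2\lambda}\big(\mu_{\theta\theta}+\mu_\theta(\mu_\theta-\lambda_\theta)\big)-e^{-2\mu}\big(\lambda_{tt}+(\lambda_t+1/t)(\lambda_t-\mu_t)\big)=4\pi q,$$ with $\rho=\frac{\pi}{t^2}\int_{-\infty}^\infty\int_0^\infty\sqrt{1+w^2+L/t^2}\,f\,dL\,dw$, $p=\frac{\pi}{t^2}\int\int\frac{w^2}{\sqrt{1+w^2+L/t^2}}f\,dL\,dw$,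 $j=\frac{\pi}{t^2}\int\int wf\,dL\,dw$, $q=\frac{\pi}{t^4}\int\int\frac{L}{\sqrt{1+w^2+L/t^2}}f\,dL\,dw$. Initial data at $t=1$: $\mathring f,\mathring\lambda,\mathring\mu$, $C^1$, 1-periodic, $\mathring f$ compactly supported in $(w,L)$, satisfying the constraint at $t=1$; the $C^1$ solution exists for all $t\ge1$. *)

From Stdlib Require Import Reals.
From Coquelicot Require Import Coquelicot.
Open Scope R_scope.

Definition dt2 (u : R -> R -> R) (t th : R) : R := Derive (fun s => u s th) t.
Definition dth2 (u : R -> R -> R) (t th : R) : R := Derive (fun r => u t r) th.
Definition dtt2 (u : R -> R -> R) (t th : R) : R := Derive (fun s => dt2 u s th) t.
Definition dthth2 (u : R -> R -> R) (t th : R) : R := Derive (fun r => dth2 u t r) th.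

Definition dt4 (f : R -> R -> R -> R -> R) t th w L := Derive (fun s => f s th w L) t.
Definition dth4 (f : R -> R -> R -> R -> R) t th w L := Derive (fun s => f t s w L) th.
Definition dw4 (f : R -> R -> R -> R -> R) t th w L := Derive (fun s => f t th s L) w.
Definition dL4 (f : R -> R -> R -> R -> R) t th w L := Derive (fun s => f t th w s) L.

Definition unc2 (u : R -> R -> R) (x : R * R) : R := u (fst x) (snd x).
Definition unc4 (f : R -> R -> R -> R -> R) (x : R * R * R * R) : R :=
  f (fst (fst (fst x))) (snd (fst (fst x))) (snd (fst x)) (snd x).
Definition unc3 (g : R -> R -> R -> R) (x : R * R * R) : R :=
  g (fst (fst x)) (snd (fst x)) (snd x).

Definition C1_2 (u : R -> R -> R) : Prop :=
  forall t th, 1 < t ->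
    ex_derive (fun s => u s th) t /\ ex_derive (fun r => u t r) th /\
    continuous (unc2 u) (t, th) /\
    continuous (unc2 (dt2 u)) (t, th) /\ continuous (unc2 (dth2 u)) (t, th).

Definition C1_4 (f : R -> R -> R -> R -> R) : Prop :=
  forall t th w L, 1 < t ->
    ex_derive (fun s => f s th w L) t /\ ex_derive (fun s => f t s w L) th /\
    ex_derive (fun s => f t th s L) w /\ ex_derive (fun s => f t th w s) L /\
    continuous (unc4 f) (t, th, w, L) /\
    continuous (unc4 (dt4 f)) (t, th, w, L) /\ continuous (unc4 (dth4 f)) (t, th, w, L) /\
    continuous (unc4 (dw4 f)) (t, th, w, L) /\ continuous (unc4 (dL4 f)) (t, th, w, L).

Definition cont_up_to_1_2 (u : R -> R -> R) : Prop :=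
  forall x : R * R, 1 <= fst x ->
    filterlim (unc2 u) (within (fun y : R * R => 1 <= fst y) (locally x)) (locally (unc2 u x)).
Definition cont_up_to_1_4 (f : R -> R -> R -> R -> R) : Prop :=
  forall x : R * R * R * R, 1 <= fst (fst (fst x)) ->
    filterlim (unc4 f) (within (fun y : R * R * R * R => 1 <= fst (fst (fst y))) (locally x))
      (locally (unc4 f x)).

Definition C1_1 (g : R -> R) : Prop :=
  forall x, ex_derive g x /\ continuous g x /\ continuous (Derive g) x.
Definition C1_3 (g : R -> R -> R -> R) : Prop :=
  forall th w L,
    ex_derive (fun s => g s w L) th /\ ex_derive (fun s => g th s L) w /\
    ex_derive (fun s => g th w s) L /\
    continuous (unc3 g) (th, w, L) /\
    continuous (unc3 (fun a b c => Derive (fun s => g s b c) a)) (th, w, L) /\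
    continuous (unc3 (fun a b c => Derive (fun s => g a s c) b)) (th, w, L) /\
    continuous (unc3 (fun a b c => Derive (fun s => g a b s) c)) (th, w, L).

(* vint g v  :<->  \int_{-oo}^{oo} \int_0^{oo} g w L dL dw  converges (as improper
   Riemann integrals) and equals v *)
Definition vint (g : R -> R -> R) (v : R) : Prop :=
  exists inner : R -> R,
    (forall w, is_RInt_gen (fun L => g w L) (at_point 0) (Rbar_locally p_infty) (inner w)) /\
    is_RInt_gen inner (Rbar_locally m_infty) (Rbar_locally p_infty) v.

(* rho, p, j, q of a distribution function g = f(t,theta,.,.) at time t *)
Definition matter (g : R -> R -> R) (t rho p j q : R) : Prop :=
  exists Irho Ip Ij Iq : R,
    vint (fun w L => sqrt (1 + w ^ 2 + L / t ^ 2) * g w L) Irho /\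
    vint (fun w L => w ^ 2 / sqrt (1 + w ^ 2 + L / t ^ 2) * g w L) Ip /\
    vint (fun w L => w * g w L) Ij /\
    vint (fun w L => L / sqrt (1 + w ^ 2 + L / t ^ 2) * g w L) Iq /\
    rho = PI / t ^ 2 * Irho /\ p = PI / t ^ 2 * Ip /\
    j = PI / t ^ 2 * Ij /\ q = PI / t ^ 4 * Iq.

Definition EV_solution (mu lam : R -> R -> R) (f : R -> R -> R -> R -> R)
    (mu0 lam0 : R -> R) (f0 : R -> R -> R -> R) : Prop :=
  C1_1 mu0 /\ C1_1 lam0 /\ C1_3 f0 /\
  (forall th, mu0 (th + 1) = mu0 th /\ lam0 (th + 1) = lam0 th) /\
  (forall th w L, f0 (th + 1) w L = f0 th w L) /\
  (forall th w L, 0 <= f0 th w L) /\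
  (exists W, forall th w L, f0 th w L <> 0 -> Rabs w <= W /\ Rabs L <= W) /\
  (forall th, exists rho p j q, matter (f0 th) 1 rho p j q /\
      Derive mu0 th = - 4 * PI * 1 * exp (mu0 th + lam0 th) * j) /\
  (forall th, mu 1 th = mu0 th /\ lam 1 th = lam0 th) /\
  (forall th w L, f 1 th w L = f0 th w L) /\
  C1_2 mu /\ C1_2 lam /\ C1_4 f /\
  cont_up_to_1_2 mu /\ cont_up_to_1_2 lam /\ cont_up_to_1_4 f /\
  (forall t th, 1 <= t -> mu t (th + 1) = mu t th /\ lam t (th + 1) = lam t th) /\
  (forall t th w L, 1 <= t -> f t (th + 1) w L = f t th w L) /\
  (forall t th w L, 1 <= t -> 0 <= f t th w L) /\
  (forall t th w L, 1 < t -> 0 <= L ->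
     dt4 f t th w L
     + exp (mu t th - lam t th) * w / sqrt (1 + w ^ 2 + L / t ^ 2) * dth4 f t th w L
     - (dt2 lam t th * w
        + exp (mu t th - lam t th) * dth2 mu t th * sqrt (1 + w ^ 2 + L / t ^ 2))
       * dw4 f t th w L = 0) /\
  (forall t th, 1 < t ->
     ex_derive (fun s => dt2 lam s th) t /\ ex_derive (fun r => dth2 mu t r) th /\
     exists rho p j q, matter (f t th) t rho p j q /\
       exp (- 2 * mu t th) * (2 * t * dt2 lam t th + 1) - 1 = 8 * PI * t ^ 2 * rho /\
       exp (- 2 * mu t th) * (2 * t * dt2 mu t th - 1) + 1 = 8 * PI * t ^ 2 * p /\
       dth2 mu t th = - 4 * PI * t * exp (mu t th + lam t th) * j /\
       exp (- 2 * lam t th) * (dthth2 mu t th + dth2 mu t th * (dth2 mu t th - dth2 lam t th))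
       - exp (- 2 * mu t th) * (dtt2 lam t th
            + (dt2 lam t th + 1 / t) * (dt2 lam t th - dt2 mu t th))
       = 4 * PI * q).

From Stdlib Require Import Reals Lra.
From Coquelicot Require Import Coquelicot.
Open Scope R_scope.

(* Fix [theta] and write [A = exp (-2 mu(1))]. The field equations for [mu_t] and
   [lam_t] have right-hand sides [8 pi t^2 p] and [8 pi t^2 rho] with
   [0 <= p <= rho]. The first gives [(t e^{-2mu} - t)_t = -8 pi t^2 p <= 0], hence
   [t e^{-2mu} <= A - 1 + t]. Their difference gives [t (mu - lam)_t <= 1 - e^{2mu}],
   and together with the previous bound this makes
   [mu - lam - ln t + ln (A - 1 + t)] nonincreasing in [t]; exponentiating yields
   the first inequality. The second holds because [A t / (A - 1 + t)] lies between
   [1] and [A]. *)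

Lemma exp_le x y : x <= y -> exp x <= exp y.
Proof.
  intros [Hlt | ->]; [now left; apply exp_increasing | now right].
Qed.

(* Right continuity at [a], encoded as continuity of [g] clamped to [a, +oo). *)
Definition right_continuous (g : R -> R) (a : R) : Prop :=
  continuous (fun s => g (Rmax a s)) a.

Lemma continuous_Rmax_l a x : continuous (fun s => Rmax a s) x.
Proof.
  intros P [eps He]. exists eps. intros s Hs. apply He.
  change (Rabs (Rmax a s - Rmax a x) < eps). change (Rabs (s - x) < eps) in Hs.
  apply Rabs_def2 in Hs. apply Rabs_def1; unfold Rmax;
    destruct (Rle_dec a s), (Rle_dec a x); lra.
Qed.

Section RightContinuity.

Variable a : R.

Lemma right_continuous_id : right_continuous (fun s => s) a.
Proof. apply continuous_Rmax_l. Qed.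

Lemma right_continuous_const c : right_continuous (fun _ => c) a.
Proof. apply continuous_const. Qed.

Lemma right_continuous_comp g F :
  right_continuous g a -> continuous F (g a) -> right_continuous (fun s => F (g s)) a.
Proof.
  intros Hg HF. apply (continuous_comp (fun s => g (Rmax a s))); [exact Hg|].
  now rewrite Rmax_left by lra.
Qed.

Lemma right_continuous_plus g h :
  right_continuous g a -> right_continuous h a -> right_continuous (fun s => g s + h s) a.
Proof. apply (continuous_plus (fun s => g (Rmax a s))). Qed.

Lemma right_continuous_minus g h :
  right_continuous g a -> right_continuous h a -> right_continuous (fun s => g s - h s) a.
Proof. apply (continuous_minus (fun s => g (Rmax a s))). Qed.

Lemma right_continuous_mult g h :
  right_continuous g a -> right_continuous h a -> right_continuous (fun s => g s * h s) a.
Proof. apply (continuous_mult (fun s => g (Rmax a s))). Qed.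

End RightContinuity.

Lemma le_of_Derive_nonpos (g : R -> R) (a b : R) : a <= b ->
  (forall x, a < x <= b -> ex_derive g x) ->
  (forall x, a < x < b -> Derive g x <= 0) ->
  right_continuous g a -> g b <= g a.
Proof.
  intros Hab Hd Hn Hc.
  destruct (Req_dec a b) as [-> | Hne]; [lra |].
  set (G := fun s => g (Rmax a s)).
  assert (HG : forall x, a < x -> locally x (fun y => g y = G y)).
  { intros x Hx. exists (mkposreal (x - a) ltac:(lra)). intros y Hy.
    unfold G. rewrite Rmax_right; auto.
    change (Rabs (y - x) < x - a) in Hy. apply Rabs_def2 in Hy. lra. }
  (* [Rmin _ 0] makes the derivative nonpositive by construction, so that [MVT_gen]
     needs no hypothesis at the right endpoint. *)
  destruct (MVT_gen G a b (fun x => Rmin (Derive g x) 0)) as [c [Hc' He]].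
  - intros x Hx. rewrite Rmin_left, Rmax_right in Hx by lra.
    rewrite Rmin_left by (apply Hn; lra).
    apply is_derive_ext_loc with g; [apply HG; lra |].
    apply Derive_correct, Hd; lra.
  - intros x Hx. rewrite Rmin_left, Rmax_right in Hx by lra.
    apply continuity_pt_filterlim.
    destruct (Req_dec x a) as [-> | Hxa]; [exact Hc |].
    apply (continuous_ext_loc _ g); [apply HG; lra |].
    apply (ex_derive_continuous (K := R_AbsRing) (V := R_NormedModule) g x), Hd; lra.
  - unfold G in He. rewrite !Rmax_right in He by lra.
    assert (Rmin (Derive g c) 0 * (b - a) <= 0)
      by (apply Rmult_le_0_r; [apply Rmin_r | lra]).
    lra.
Qed.

Lemma vint_abs_le h1 h2 v1 v2 : vint h1 v1 -> vint h2 v2 ->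
  (forall w L, 0 <= L -> Rabs (h2 w L) <= h1 w L) -> Rabs v2 <= v1.
Proof.
  intros [i1 [Hi1 Ho1]] [i2 [Hi2 Ho2]] H.
  assert (Hin : forall w, Rabs (i2 w) <= i1 w).
  { intros w.
    apply (RInt_gen_norm (Fa := at_point 0) (Fb := Rbar_locally p_infty)
             (fun L => h2 w L) (fun L => h1 w L));
      try apply at_point_filter; try apply Rbar_locally_filter; auto.
    - apply (Filter_prod _ _ _ (fun x => x = 0) (fun y => 0 < y)); [reflexivity | now exists 0 |].
      intros x y -> Hy; simpl; lra.
    - apply (Filter_prod _ _ _ (fun x => x = 0) (fun y => 0 < y)); [reflexivity | now exists 0 |].
      intros x y -> Hy z Hz; simpl in Hz. apply H; lra. }
  apply (RInt_gen_norm (Fa := Rbar_locally m_infty) (Fb := Rbar_locally p_infty) i2 i1);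
    try apply Rbar_locally_filter; auto.
  - apply (Filter_prod _ _ _ (fun x => x < 0) (fun y => 0 < y)); try now exists 0.
    intros x y Hx Hy; simpl; lra.
  - apply (Filter_prod _ _ _ (fun x => x < 0) (fun y => 0 < y)); try now exists 0.
    intros x y Hx Hy z Hz. apply Hin.
Qed.

Lemma matter_pressure_bounds (g : R -> R -> R) t rho p j q :
  0 < t -> (forall w L, 0 <= g w L) -> matter g t rho p j q -> 0 <= p <= rho.
Proof.
  intros Ht Hg (Irho & Ip & Ij & Iq & Hrho & Hp & _ & _ & -> & -> & _ & _).
  assert (Hroot : forall w L, 0 <= L ->
    w ^ 2 <= w ^ 2 + L / t ^ 2 /\ 0 < sqrt (1 + w ^ 2 + L / t ^ 2)).
  { intros w L HL.
    assert (0 <= L / t ^ 2) by (apply Rdiv_le_0_compat; [lra | apply pow_lt; lra]).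
    pose proof (pow2_ge_0 w). split; [lra | apply sqrt_lt_R0; lra]. }
  assert (Hweight : forall w L, 0 <= L ->
    0 <= w ^ 2 / sqrt (1 + w ^ 2 + L / t ^ 2) <= sqrt (1 + w ^ 2 + L / t ^ 2)).
  { intros w L HL. destruct (Hroot w L HL) as [Hw Hs]. pose proof (pow2_ge_0 w).
    set (S := 1 + w ^ 2 + L / t ^ 2) in *.
    split; [apply Rdiv_le_0_compat; [apply pow2_ge_0 | lra] |].
    apply Rle_div_l; [lra |]. rewrite sqrt_sqrt by (unfold S; lra). unfold S; lra. }
  assert (HIp : Rabs Ip <= Ip).
  { apply (vint_abs_le _ _ _ _ Hp Hp). intros w L HL.
    rewrite Rabs_right; [lra |]. apply Rle_ge, Rmult_le_pos; [apply Hweight | apply Hg]; lra. }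
  assert (HIrho : Rabs Ip <= Irho).
  { apply (vint_abs_le _ _ _ _ Hrho Hp). intros w L HL.
    destruct (Hweight w L HL). pose proof (Hg w L).
    rewrite Rabs_right by (apply Rle_ge, Rmult_le_pos; lra).
    apply Rmult_le_compat_r; lra. }
  assert (0 < PI / t ^ 2) by (apply Rdiv_lt_0_compat; [apply PI_RGT_0 | apply pow_lt; lra]).
  pose proof (Rabs_pos Ip). pose proof (Rle_abs Ip).
  split; [apply Rmult_le_pos | apply Rmult_le_compat_l]; lra.
Qed.

Section Comparison.

Variables m l : R -> R.
Hypothesis m_derivable : forall t, 1 < t -> ex_derive m t.
Hypothesis l_derivable : forall t, 1 < t -> ex_derive l t.
Hypothesis m_right_continuous : right_continuous m 1.
Hypothesis l_right_continuous : right_continuous l 1.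
(* The left sides are [8 pi t^2 p] and [8 pi t^2 rho] in the field equations. *)
Hypothesis pressure_nonneg :
  forall t, 1 < t -> 0 <= exp (-2 * m t) * (2 * t * Derive m t - 1) + 1.
Hypothesis pressure_le_density : forall t, 1 < t ->
  exp (-2 * m t) * (2 * t * Derive m t - 1) + 1
  <= exp (-2 * m t) * (2 * t * Derive l t + 1) - 1.

Let A0 := exp (-2 * m 1).

Lemma scaled_metric_bound t : 1 <= t -> t * exp (-2 * m t) <= A0 - 1 + t.
Proof.
  intros Ht.
  set (g := fun s => s * exp (-2 * m s) - s).
  assert (Hd : forall x, 1 < x ->
    is_derive g x (- (exp (-2 * m x) * (2 * x * Derive m x - 1) + 1))).
  { intros x Hx. unfold g. auto_derive; [now apply m_derivable |].
    change (Derive (fun y => m y) x) with (Derive m x). ring. }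
  enough (g t <= g 1) by (unfold g, A0 in *; lra).
  apply le_of_Derive_nonpos; [lra | | |].
  - intros x Hx. eexists. apply Hd. lra.
  - intros x Hx. rewrite (is_derive_unique _ _ _ (Hd x ltac:(lra))).
    pose proof (pressure_nonneg x ltac:(lra)). lra.
  - unfold g. apply right_continuous_minus; [apply right_continuous_mult |];
      try apply right_continuous_id.
    apply (right_continuous_comp _ (fun s => -2 * m s));
      [apply right_continuous_mult; [apply right_continuous_const | exact m_right_continuous] |].
    apply continuous_exp.
Qed.

Lemma exp_mu_minus_lambda_bound t : 1 <= t ->
  exp (m t - l t) <= exp (m 1 - l 1) * (A0 * t / (A0 - 1 + t)).
Proof.
  intros Ht.
  assert (HA0 : 0 < A0) by apply exp_pos.
  set (g := fun s => m s - l s - ln s + ln (A0 - 1 + s)).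
  assert (Hd : forall x, 1 < x -> is_derive g x
    (Derive m x - Derive l x - / x + / (A0 - 1 + x))).
  { intros x Hx. unfold g. auto_derive; [repeat split; auto; lra |].
    change (Derive (fun y => m y) x) with (Derive m x).
    change (Derive (fun y => l y) x) with (Derive l x). field; lra. }
  assert (Hg : g t <= g 1).
  { apply le_of_Derive_nonpos; [lra | | |].
    - intros x Hx. eexists. apply Hd. lra.
    - intros x Hx. rewrite (is_derive_unique _ _ _ (Hd x ltac:(lra))).
      set (A := exp (-2 * m x)).
      assert (HA : 0 < A) by apply exp_pos.
      assert (HxA : 0 < x * A) by (apply Rmult_lt_0_compat; lra).
      assert (Hdiff : Derive m x - Derive l x <= / x - / (x * A)).
      { apply (Rmult_le_reg_l (x * A)); [exact HxA |].
        replace (x * A * (/ x - / (x * A))) with (A - 1) by (field; lra).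
        pose proof (pressure_le_density x ltac:(lra)) as Hrho. fold A in Hrho. nra. }
      assert (Hinv : / (A0 - 1 + x) <= / (x * A))
        by (apply Rinv_le_contravar; [exact HxA | apply scaled_metric_bound; lra]).
      lra.
    - unfold g. apply right_continuous_plus; [apply right_continuous_minus |].
      + now apply right_continuous_minus.
      + apply (right_continuous_comp _ (fun s => s)); [apply right_continuous_id |].
        apply continuous_ln; lra.
      + apply (right_continuous_comp _ (fun s => A0 - 1 + s));
          [apply right_continuous_plus; [apply right_continuous_const | apply right_continuous_id] |].
        apply continuous_ln; lra. }
  assert (Hpos : 0 < A0 * t / (A0 - 1 + t))
    by (apply Rdiv_lt_0_compat; [apply Rmult_lt_0_compat |]; lra).
  rewrite <- (exp_ln _ Hpos), <- exp_plus. apply exp_le.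
  unfold g in Hg. rewrite ln_1, ln_div, ln_mult in * by (try apply Rmult_lt_0_compat; lra).
  replace (A0 - 1 + 1) with A0 in Hg by ring. lra.
Qed.

End Comparison.

Lemma exp_metric_factor_le (m l t : R) : 1 <= t ->
  exp (m - l) * (exp (-2 * m) * t / (exp (-2 * m) - 1 + t)) <= exp (Rabs m - l).
Proof.
  intros Ht.
  set (A := exp (-2 * m)).
  assert (HA : 0 < A) by apply exp_pos.
  assert (HD : 0 < A - 1 + t) by lra.
  pose proof (exp_pos (m - l)) as He.
  destruct (Rle_or_lt 0 m) as [Hm | Hm].
  - rewrite Rabs_right by lra.
    assert (HA1 : A <= 1) by (unfold A; rewrite <- exp_0; apply exp_le; lra).
    assert (Hfac : A * t / (A - 1 + t) <= 1).
    { apply Rle_div_l; [lra |]. pose proof (Rmult_le_pos (1 - A) (t - 1) ltac:(lra) ltac:(lra)). nra. }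
    pose proof (Rmult_le_compat_l _ _ _ (Rlt_le _ _ He) Hfac). lra.
  - rewrite Rabs_left by lra.
    replace (- m - l) with (m - l + -2 * m) by ring. rewrite exp_plus. fold A.
    assert (HA1 : 1 <= A) by (unfold A; rewrite <- exp_0; apply exp_le; lra).
    apply Rmult_le_compat_l; [lra |]. apply Rle_div_l; [lra |].
    pose proof (Rmult_le_pos (A - 1) (t - 1) ltac:(lra) ltac:(lra)). nra.
Qed.

Lemma right_continuous_of_cont_up_to_1 (u : R -> R -> R) th :
  cont_up_to_1_2 u -> right_continuous (fun s => u s th) 1.
Proof.
  intros H P HP.
  destruct (H (1, th) (Rle_refl 1) P) as [eps He].
  { now rewrite Rmax_left in HP by lra. }
  exists eps. intros s Hs. apply (He (Rmax 1 s, th)); [split; simpl | apply Rmax_l].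
  - change (Rabs (Rmax 1 s - 1) < eps). change (Rabs (s - 1) < eps) in Hs.
    unfold Rmax; destruct (Rle_dec 1 s); [exact Hs |].
    rewrite Rminus_diag, Rabs_R0. apply cond_pos.
  - apply ball_center.
Qed.

Lemma EV_pressure_bounds mu lam f mu0 lam0 f0 :
  EV_solution mu lam f mu0 lam0 f0 -> forall t th, 1 < t ->
    0 <= exp (-2 * mu t th) * (2 * t * dt2 mu t th - 1) + 1
      <= exp (-2 * mu t th) * (2 * t * dt2 lam t th + 1) - 1.
Proof.
  intros (_ & _ & _ & _ & _ & _ & _ & _ & _ & _ & _ & _ & _ & _ & _ & _ & _ & _ & Hf & _ & Hfield)
    t th Ht.
  destruct (Hfield t th Ht) as (_ & _ & rho & p & j & q & Hm & -> & -> & _).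
  assert (Hp : 0 <= p <= rho).
  { apply (matter_pressure_bounds (f t th) t rho p j q); [lra | | exact Hm].
    intros w L; apply Hf; lra. }
  assert (0 <= 8 * PI * t ^ 2) by (pose proof PI_RGT_0; pose proof (pow2_ge_0 t); nra).
  split; [| apply Rmult_le_compat_l]; nra.
Qed.

Theorem mainTheorem4 (mu lam : R -> R -> R) (f : R -> R -> R -> R -> R)
    (mu0 lam0 : R -> R) (f0 : R -> R -> R -> R) :
  EV_solution mu lam f mu0 lam0 f0 ->
  forall t th, 1 <= t -> 0 <= th <= 1 ->
    exp (mu t th - lam t th)
      <= exp (mu0 th - lam0 th)
         * (exp (- 2 * mu0 th) * t / (exp (- 2 * mu0 th) - 1 + t)) /\
    exp (mu0 th - lam0 th)
         * (exp (- 2 * mu0 th) * t / (exp (- 2 * mu0 th) - 1 + t))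
      <= exp (Rabs (mu0 th) - lam0 th).
Proof.
  intros Hsol t th Ht _.
  pose proof (EV_pressure_bounds _ _ _ _ _ _ Hsol) as Hpressure.
  destruct Hsol as (_ & _ & _ & _ & _ & _ & _ & _ & Hinit & _ & Cmu & Clam & _ & Kmu & Klam & _).
  destruct (Hinit th) as [<- <-].
  split; [| now apply exp_metric_factor_le].
  apply (exp_mu_minus_lambda_bound (fun s => mu s th) (fun s => lam s th)); auto.
  - intros x Hx. apply (Cmu x th Hx).
  - intros x Hx. apply (Clam x th Hx).
  - now apply right_continuous_of_cont_up_to_1.
  - now apply right_continuous_of_cont_up_to_1.
  - intros x Hx. apply (Hpressure x th Hx).
  - intros x Hx. apply (Hpressure x th Hx).
Qed.
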